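(* Let $p,q$ be coprime integers with $|p|\ge 2$ and $|q|\ge 2$, let $T=T(p,q)$, write $c=c(T)$, and set $\rho=\rho(T)=\left|\frac{6v_3(T)}{v_2(T)}\right|$. Then $$24\,v_2(T)\,(c-\rho)^2=c\left((c-\rho)^2-1\right)(2\rho-c),$$ and $$c=\rho-\tfrac{1}{2}\left(\sqrt{(\rho-1)^2-24v_2(T)}+\sqrt{(\rho+1)^2-24v_2(T)}\right).$$
   Context: $v_2$ and $v_3$ are the first two Vassiliev knot invariants, normalized as follows. The space of additive Vassiliev invariants of type three splits into invariants unchanged under taking mirror images and invariants that change sign under mirror image; $v_2$ (resp.\ $v_3$) is the element of the first (resp.\ second) one-dimensional summand taking the value $1$ on the positive trefoil. For coprime integers $p,q$ with $|p|,|q|\ge 2$, $T(p,q)$ denotes the (nontrivial) $(p,q)$-torus knot, and its invariants are known to be $$v_2(T(p,q))=\tfrac{1}{24}(p^2-1)(q^2-1),\qquad v_3(T(p,q))=\tfrac{1}{144}\,pq\,(p^2-1)(q^2-1).$$ $c(T)$ denotes the crossing number; for torus knots it is known that $c(T(p,q))=|q|(|p|-1)$ when $|p|<|q|$ (and symmetrically $c(T(p,q))=|p|(|q|-1)$ when $|q|<|p|$). *)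

(* Knot invariants of torus knots T(p,q), given by the
   closed formulas stated as known facts in the paper's context. *)
From mathcomp Require Import all_boot all_order all_algebra.
From mathcomp Require Import all_reals.
Set Implicit Arguments. Unset Strict Implicit. Unset Printing Implicit Defensive.
Import Order.TTheory GRing.Theory Num.Theory.
Local Open Scope ring_scope.

Definition v2_torus (R : realType) (p q : int) : R :=
  ((p ^+ 2 - 1) * (q ^+ 2 - 1))%:~R / 24%:R.

Definition v3_torus (R : realType) (p q : int) : R :=
  (p * q * (p ^+ 2 - 1) * (q ^+ 2 - 1))%:~R / 144%:R.

Definition crossing_torus (p q : int) : nat :=
  if (`|p| < `|q|)%N then (`|q| * (`|p| - 1))%N else (`|p| * (`|q| - 1))%N.

Definition rho_torus (R : realType) (p q : int) : R :=
  `| 6%:R * v3_torus R p q / v2_torus R p q |.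

(** With a = |p| and b = |q|, the closed formulas give 24 v_2 = (a^2-1)(b^2-1),
    rho = ab and c = ab - max(a,b).  The radicands then become perfect squares,
    (rho -+ 1)^2 - 24 v_2 = (a -+ b)^2, so the two square roots add up to
    2 max(a,b), and both identities reduce to polynomial identities in a, b. *)
From mathcomp Require Import all_boot all_order all_algebra.
From mathcomp Require Import all_reals.
From mathcomp Require Import ring lra.
Import Order.TTheory GRing.Theory Num.Theory.
Local Open Scope ring_scope.

Lemma intr_sqr_absz (R : realDomainType) (p : int) :
  (p%:~R : R) ^+ 2 = (`|p|%N)%:R ^+ 2.
Proof. by rewrite natr_absz intr_norm real_normK ?num_real. Qed.

Lemma v2_torus_abs (R : realType) (p q : int) :
  24%:R * v2_torus R p q
  = ((`|p|%N)%:R ^+ 2 - 1) * ((`|q|%N)%:R ^+ 2 - 1) :> R.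
Proof.
rewrite /v2_torus !(rmorphM, rmorphB, rmorphXn, rmorph1) /= -!expr2.
by rewrite !intr_sqr_absz mulrC divfK ?pnatr_eq0.
Qed.

Lemma rho_torus_abs (R : realType) (p q : int) :
  (2 <= `|p|)%N -> (2 <= `|q|)%N ->
  rho_torus R p q = (`|p|%N)%:R * (`|q|%N)%:R.
Proof.
move=> hp hq; set a : R := (`|p|%N)%:R; set b : R := (`|q|%N)%:R.
have ha : 2 <= a by rewrite (ler_nat R 2).
have hb : 2 <= b by rewrite (ler_nat R 2).
rewrite /rho_torus.
have -> : 6%:R * v3_torus R p q / v2_torus R p q = p%:~R * q%:~R.
  rewrite /v3_torus /v2_torus !(rmorphM, rmorphB, rmorphXn, rmorph1) /= -!expr2.
  rewrite !intr_sqr_absz -/a -/b.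
  by field; apply/andP; split; rewrite subr_eq0; apply/eqP; nra.
by rewrite normrM -!intr_norm -!natr_absz.
Qed.

Lemma crossing_torus_max (R : realType) (p q : int) :
  (1 <= `|p|)%N -> (1 <= `|q|)%N ->
  (crossing_torus p q)%:R
  = (`|p|%N)%:R * (`|q|%N)%:R - Num.max (`|p|%N)%:R (`|q|%N)%:R :> R.
Proof.
move=> hp hq; rewrite /crossing_torus /Num.max ltr_nat.
case: ltnP => hpq; rewrite natrM natrB // mulrBr mulr1 //.
by rewrite mulrC.
Qed.

Section TorusAlgebra.

Variables (R : rcfType) (a b : R).

Lemma sqr_subr1_sub :
  (a * b - 1) ^+ 2 - (a ^+ 2 - 1) * (b ^+ 2 - 1) = (a - b) ^+ 2.
Proof. by ring. Qed.

Lemma sqr_addr1_sub :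
  (a * b + 1) ^+ 2 - (a ^+ 2 - 1) * (b ^+ 2 - 1) = (a + b) ^+ 2.
Proof. by ring. Qed.

Lemma sqrt_sub_add_max : 0 <= a -> 0 <= b ->
  Num.sqrt ((a - b) ^+ 2) + Num.sqrt ((a + b) ^+ 2) = 2%:R * Num.max a b.
Proof.
move=> a0 b0; rewrite !sqrtr_sqr (@ger0_norm _ (a + b)); last by lra.
by rewrite /Num.max; case: ltrP => _; ring.
Qed.

Lemma torus_crossing_identity (m : R) : m = a \/ m = b ->
  (a ^+ 2 - 1) * (b ^+ 2 - 1) * m ^+ 2
  = (a * b - m) * (m ^+ 2 - 1) * (a * b + m).
Proof. by case=> ->; ring. Qed.

End TorusAlgebra.

Theorem proposition3p6 (R : realType) (p q : int) :
  coprimez p q -> (2 <= `|p|)%N -> (2 <= `|q|)%N ->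
  let c : R := (crossing_torus p q)%:R in
  let rho : R := rho_torus R p q in
  let v2 : R := v2_torus R p q in
  24%:R * v2 * (c - rho) ^+ 2 = c * ((c - rho) ^+ 2 - 1) * (2%:R * rho - c)
  /\
  c = rho - 2%:R^-1 * (Num.sqrt ((rho - 1) ^+ 2 - 24%:R * v2)
                       + Num.sqrt ((rho + 1) ^+ 2 - 24%:R * v2)).
Proof.
move=> _ hp hq c rho v2.
rewrite /c /rho /v2 v2_torus_abs rho_torus_abs // crossing_torus_max
  ?(leq_trans _ hp) ?(leq_trans _ hq) //.
set a : R := (`|p|%N)%:R; set b : R := (`|q|%N)%:R.
rewrite sqr_subr1_sub sqr_addr1_sub sqrt_sub_add_max ?ler0n //.
have hm : Num.max a b = a \/ Num.max a b = b.
  by rewrite /Num.max; case: ltP; [right | left].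
move: (Num.max a b) hm => m hm; clearbody a b.
have -> : a * b - m - a * b = - m by ring.
have -> : 2%:R * (a * b) - (a * b - m) = a * b + m by ring.
split; last by rewrite mulKf ?pnatr_eq0.
by rewrite sqrrN torus_crossing_identity.
Qed.
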